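(* Let $n\ge 5$ and let $C_n$ be the cycle with $n$ vertices. Then $C_n$ is not a $2$-threshold graph: there are no real numbers $\theta_1<\theta_2$ and map $r:V(C_n)\to\mathbb{R}$ such that for all distinct vertices $u,v$, $uv$ is an edge if and only if $\theta_1\le r(u)+r(v)<\theta_2$.
   Context: All graphs are finite and simple. $C_n$ denotes the cycle with $n$ vertices. *)

From mathcomp Require Import all_boot all_order all_algebra.
From mathcomp Require Import reals.
Set Implicit Arguments. Unset Strict Implicit. Unset Printing Implicit Defensive.
Import Order.TTheory GRing.Theory Num.Theory.
Local Open Scope ring_scope.

(* Cycle C_n on vertex set 'I_n: i ~ j iff j = i+1 mod n or i = j+1 mod n,
   and i <> j (simple graph). For n >= 3 this is the n-cycle. *)
Definition cycle_adj (n : nat) : rel 'I_n :=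
  fun i j => (i != j) &&
    ((j == (i.+1 %% n)%N :> nat) || (i == (j.+1 %% n)%N :> nat)).

Definition two_threshold (R : realType) (V : finType) (adj : rel V) : Prop :=
  exists (theta1 theta2 : R) (r : V -> R),
    theta1 < theta2 /\
    forall u v : V, u != v ->
      (adj u v <-> (theta1 <= r u + r v) && (r u + r v < theta2)).
Arguments cycle_adj n : clear implicits.

From mathcomp Require Import all_boot all_order all_algebra.
From mathcomp Require Import reals zify.
Set Implicit Arguments. Unset Strict Implicit. Unset Printing Implicit Defensive.
Import Order.TTheory GRing.Theory Num.Theory.
Local Open Scope ring_scope.

(* Let k be a vertex of minimal weight and a, b its two neighbours, say
   r a <= r b, and let c be the other neighbour of b.  Then
   theta1 <= r a + r k <= r a + r c <= r b + r c < theta2, so a and c would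
   have to be adjacent; but they are at distance 3 on the cycle, which for
   n >= 5 means they are not. *)

Section TwoThresholdRepresentation.

Variables (R : numDomainType) (V : finType) (adj : rel V).
Variables (theta1 theta2 : R) (r : V -> R).
Hypothesis adj_irr : irreflexive adj.
Hypothesis adj_rep : forall u v, u != v ->
  adj u v <-> (theta1 <= r u + r v) && (r u + r v < theta2).

Lemma adj_neq u v : adj u v -> u != v.
Proof. by apply: contraTneq => ->; rewrite adj_irr. Qed.

Lemma adj_of_min_weight k a b c :
  (forall i, r k <= r i) -> adj a k -> adj b c -> r a <= r b -> a != c ->
  adj a c.
Proof.
move=> k_min ak bc le_ab ac.
have /(adj_rep (adj_neq ak))/andP[low_ak _] := ak.
have /(adj_rep (adj_neq bc))/andP[_ up_bc] := bc.
apply/(adj_rep ac)/andP; split.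
  by apply: le_trans low_ak _; rewrite lerD2l.
by apply: le_lt_trans up_bc; rewrite lerD2r.
Qed.

End TwoThresholdRepresentation.

Lemma val_ordS n (i : 'I_n) :
  val (ordS i) = (if (val i).+1 == n then 0 else (val i).+1)%N.
Proof.
rewrite /=; case: eqP => [-> | ne_n]; first exact: modnn.
by apply: modn_small; have := ltn_ord i; lia.
Qed.

Lemma cycle_adjE n (i j : 'I_n) :
  cycle_adj n i j = (i != j) && ((j == ordS i) || (i == ordS j)).
Proof. by []. Qed.

Lemma cycle_adj_sym n : symmetric (cycle_adj n).
Proof. by move=> i j; rewrite /cycle_adj eq_sym orbC. Qed.

Lemma cycle_adj_irr n : irreflexive (cycle_adj n).
Proof. by move=> i; rewrite /cycle_adj eqxx. Qed.

Lemma cycle_adj_ordS n (i : 'I_n) : (1 < n)%N -> cycle_adj n i (ordS i).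
Proof.
move=> n_gt1; rewrite cycle_adjE eqxx andbT -val_eqE val_ordS /=.
by have := ltn_ord i; case: ifP; lia.
Qed.

Lemma cycle_adj_ord_pred n (i : 'I_n) : (1 < n)%N -> cycle_adj n (ord_pred i) i.
Proof. by move=> n_gt1; rewrite -{2}(ord_predK i) cycle_adj_ordS. Qed.

Lemma ordS3_neq n (i : 'I_n) : (3 < n)%N -> i != ordS (ordS (ordS i)).
Proof.
move=> n_gt3; rewrite -val_eqE !val_ordS /=.
by have := ltn_ord i; repeat case: ifP; lia.
Qed.

Lemma not_cycle_adj_ordS3 n (i : 'I_n) :
  (5 <= n)%N -> ~~ cycle_adj n i (ordS (ordS (ordS i))).
Proof.
move=> n_ge5; rewrite cycle_adjE -!val_eqE !val_ordS /=.
by have := ltn_ord i; repeat case: ifP; lia.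
Qed.

Theorem mainTheorem3 (R : realType) (n : nat) :
  (5 <= n)%N -> ~ two_threshold R (cycle_adj n).
Proof.
move=> n_ge5 [theta1 [theta2 [r [_ r_rep]]]].
have n_gt3 : (3 < n)%N by apply: leq_trans n_ge5.
have n_gt1 : (1 < n)%N by apply: ltn_trans n_gt3.
have adj_min := adj_of_min_weight (@cycle_adj_irr n) r_rep.
have [k _ k_min] := @arg_minP _ _ _ (Ordinal n_gt1) xpredT r isT.
have {}k_min i : r k <= r i by apply: k_min.
case: (lerP (r (ord_pred k)) (r (ordS k))) => [le_pS | /ltW le_Sp].
- have := not_cycle_adj_ordS3 (ord_pred k) n_ge5; rewrite ord_predK => /negP.
  apply; apply: adj_min k_min (cycle_adj_ord_pred k n_gt1) _ le_pS _.
    exact: cycle_adj_ordS.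
  by have := ordS3_neq (ord_pred k) n_gt3; rewrite ord_predK.
- set c := ord_pred (ord_pred k).
  have := not_cycle_adj_ordS3 c n_ge5; rewrite !ord_predK cycle_adj_sym => /negP.
  apply; apply: adj_min k_min _ _ le_Sp _.
  + by rewrite cycle_adj_sym cycle_adj_ordS.
  + by rewrite cycle_adj_sym cycle_adj_ord_pred.
  + by have := ordS3_neq c n_gt3; rewrite !ord_predK eq_sym.
Qed.
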